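(* Let $\eta$ be an ordinal with $\eta\in\mathcal{H}_\eta(\emptyset)$, and for any ordinal $\beta$ put $\hat\beta:=\eta+\omega^{\Omega+\beta}$. Then: (i) if $\alpha\in\mathcal{H}_\eta(\emptyset)$ then $\hat\alpha\in\mathcal{H}_{\hat\alpha}(\emptyset)$ and $\psi_\Omega(\hat\alpha)\in\mathcal{H}_{\hat\alpha}(\emptyset)$; (ii) if $\alpha_0\in\mathcal{H}_\eta(\emptyset)$ and $\alpha_0<\alpha$ then $\psi_\Omega(\hat{\alpha_0})<\psi_\Omega(\hat\alpha)$.
   Context: Let $\Omega$ be a big ordinal (e.g. $\aleph_1$), and $\varphi$ the binary Veblen function. By transfinite recursion on $\alpha$ define $B^\Omega(\alpha)$ as the closure of $\{0,\Omega\}$ under $+$, $(\xi,\eta)\mapsto\varphi\xi\eta$, and $\xi\mapsto\psi_\Omega(\xi)$ for $\xi<\alpha$; and $\psi_\Omega(\alpha):=\min\{\rho<\Omega:\rho\notin B^\Omega(\alpha)\}$. Let $\varepsilon_{\Omega+1}$ be the least $\eta>\Omega$ with $\omega^\eta=\eta$; all ordinals considered belong to $B^\Omega(\varepsilon_{\Omega+1})$. For each $\eta$ and each set $X$ of such ordinals, $\mathcal{H}_\eta(X):=\bigcap\{B^\Omega(\alpha): X\subseteq B^\Omega(\alpha)\text{ and }\eta<\alpha\}$. *)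

(* Ordinals are modelled by an abstract "ordinal universe":
   a well-ordered type whose order type is an uncountable regular cardinal
   kappa, together with the element Omega = aleph_1 (= omega_1).  Since kappa
   is regular and > aleph_1, it is an initial segment of the ordinals closed
   under +, *, omega-exponentiation and the binary Veblen function, so all
   the (textbook) recursive definitions below compute the genuine ordinal
   operations on it. *)
From Stdlib Require Import ClassicalEpsilon.

Definition countable_below {O : Type} (lt : O -> O -> Prop) (x : O) : Prop :=
  exists g : O -> nat, forall y z, lt y x -> lt z x -> g y = g z -> y = z.

Record OrdUniverse := {
  carrier :> Type;
  olt : carrier -> carrier -> Prop;
  Omega : carrier;
  olt_trans : forall x y z, olt x y -> olt y z -> olt x z;
  olt_total : forall x y, olt x y \/ x = y \/ olt y x;
  olt_wf : well_founded olt;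
  olt_regular : forall (x : carrier) (f : carrier -> carrier),
      exists b, forall y, olt y x -> olt (f y) b;
  Omega_uncountable : ~ countable_below olt Omega;
  Omega_least : forall x, olt x Omega -> countable_below olt x
}.

Section Ordinals.
Variable U : OrdUniverse.
Local Notation O := (carrier U).
Local Notation "x < y" := (olt U x y).
Definition ole (x y : O) : Prop := x < y \/ x = y.
Local Notation "x <= y" := (ole x y).

Definition inhO : inhabited O := inhabits (Omega U).

(* least element satisfying P (arbitrary if there is none) *)
Definition omin (P : O -> Prop) : O :=
  epsilon inhO (fun x => P x /\ forall y, P y -> x <= y).

Definition ozero : O := omin (fun _ => True).
Definition osucc (x : O) : O := omin (fun y => x < y).
Definition oone : O := osucc ozero.
Definition is_limit (b : O) : Prop := b <> ozero /\ forall c, b <> osucc c.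
Definition oomega : O := omin is_limit.
Definition osup (S : O -> Prop) : O := omin (fun u => forall g, S g -> g <= u).

Definition inhF : inhabited (O -> O -> O) := inhabits (fun _ _ => Omega U).
Definition inhF1 : inhabited (O -> O) := inhabits (fun _ => Omega U).

Definition oadd : O -> O -> O := epsilon inhF (fun f => forall a,
  f a ozero = a /\ (forall c, f a (osucc c) = osucc (f a c)) /\
  (forall b, is_limit b -> f a b = osup (fun g => exists c, c < b /\ g = f a c))).

Definition omul : O -> O -> O := epsilon inhF (fun f => forall a,
  f a ozero = ozero /\ (forall c, f a (osucc c) = oadd (f a c) a) /\
  (forall b, is_limit b -> f a b = osup (fun g => exists c, c < b /\ g = f a c))).

Definition oexp : O -> O := epsilon inhF1 (fun f =>
  f ozero = oone /\ (forall c, f (osucc c) = omul (f c) oomega) /\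
  (forall b, is_limit b -> f b = osup (fun g => exists c, c < b /\ g = f c))).

Definition oenum (S : O -> Prop) : O -> O := epsilon inhF1 (fun f =>
  forall b, f b = omin (fun g => S g /\ forall c, c < b -> f c < g)).

Definition phi : O -> O -> O := epsilon inhF (fun F =>
  F ozero = oexp /\
  forall x, ozero < x -> F x = oenum (fun g => forall z, z < x -> F z g = g)).

(* B^Omega(a) relative to a candidate collapsing function p *)
Inductive Bclos (p : O -> O) (a : O) : O -> Prop :=
| Bclos_zero : Bclos p a ozero
| Bclos_Omega : Bclos p a (Omega U)
| Bclos_add : forall x y, Bclos p a x -> Bclos p a y -> Bclos p a (oadd x y)
| Bclos_phi : forall x y, Bclos p a x -> Bclos p a y -> Bclos p a (phi x y)
| Bclos_psi : forall x, Bclos p a x -> x < a -> Bclos p a (p x).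

Definition psi : O -> O := epsilon inhF1 (fun p =>
  forall a, p a = omin (fun r => r < Omega U /\ ~ Bclos p a r)).

Definition B (a : O) : O -> Prop := Bclos psi a.

Definition H (eta : O) (X : O -> Prop) : O -> Prop :=
  fun g => forall a, (forall x, X x -> B a x) -> eta < a -> B a g.

Definition eps_Omega1 : O := omin (fun e => Omega U < e /\ oexp e = e).

Definition hat (eta b : O) : O := oadd eta (oexp (oadd (Omega U) b)).

End Ordinals.

(* The collapsing value psi(a) is the least countable ordinal outside B(a), and B(a) grows
   with a, so psi is weakly increasing.  Since eta <= hat alpha and B(a) is closed under
   hat, the hypotheses on eta and alpha put hat alpha into every B(a) with a > hat alpha,
   hence also psi(hat alpha), which gives (i).  As hat is strictly increasing, (i) puts
   psi(hat alpha0) into B(hat alpha), which psi(hat alpha) avoids: so the two values differ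
   and (ii) follows.  psi is well defined because B(a) is generated by countably many
   terms and so misses some countable ordinal. *)
From Stdlib Require Import ClassicalEpsilon Classical FunctionalExtensionality PropExtensionality.
From Stdlib Require Cantor.

Section OrdinalUniverse.
Variable U : OrdUniverse.
Local Notation O := (carrier U).
Local Notation "x <o y" := (olt U x y) (at level 70).
Local Notation "x <=o y" := (ole U x y) (at level 70).

Lemma olt_irrefl x : ~ x <o x.
Proof. induction x as [x IH] using (well_founded_ind (olt_wf U)). intro h. exact (IH x h h). Qed.

Lemma ole_refl x : x <=o x.
Proof. right; reflexivity. Qed.

Lemma ole_olt_trans x y z : x <=o y -> y <o z -> x <o z.
Proof. intros [h| ->] h2; [exact (olt_trans U _ _ _ h h2) | exact h2]. Qed.

Lemma olt_ole_trans x y z : x <o y -> y <=o z -> x <o z.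
Proof. intros h [h2| <-]; [exact (olt_trans U _ _ _ h h2) | exact h]. Qed.

Lemma ole_not_olt x y : x <=o y -> ~ y <o x.
Proof. intros h h2. exact (olt_irrefl _ (ole_olt_trans _ _ _ h h2)). Qed.

Lemma not_olt_ole x y : ~ y <o x -> x <=o y.
Proof.
  intro h. destruct (olt_total U x y) as [h1|[h1|h1]];
    [left; exact h1 | right; exact h1 | contradiction].
Qed.

Lemma omin_spec (P : O -> Prop) :
  (exists x, P x) -> P (omin U P) /\ forall y, P y -> omin U P <=o y.
Proof.
  intros [x Px]. apply (epsilon_spec (inhO U) (fun m => P m /\ forall y, P y -> m <=o y)).
  induction x as [x IH] using (well_founded_ind (olt_wf U)).
  destruct (classic (exists y, y <o x /\ P y)) as [[y [hy Py]]|hn].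
  - exact (IH y hy Py).
  - exists x. split; [exact Px|]. intros y Py. apply not_olt_ole. intro h. apply hn. eauto.
Qed.

Lemma ozero_le x : ozero U <=o x.
Proof. apply (omin_spec (fun _ => True)); [exists x|]; exact I. Qed.

Definition fam (f : O -> O) (b : O) : O -> Prop := fun g => exists c, c <o b /\ g = f c.

(* Regularity of the universe is what makes every such supremum exist. *)
Lemma osup_spec f b :
  (forall c, c <o b -> f c <=o osup U (fam f b)) /\
  (forall u, (forall c, c <o b -> f c <=o u) -> osup U (fam f b) <=o u).
Proof.
  destruct (omin_spec (fun u => forall g, fam f b g -> g <=o u)) as [h1 h2].
  - destruct (olt_regular U b f) as [m hm]. exists m. intros g [c [hc ->]]. left. exact (hm c hc).
  - split.
    + intros c hc. apply h1. exists c; auto.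
    + intros u hu. apply h2. intros g [c [hc ->]]. exact (hu c hc).
Qed.

Lemma exists_olt_Omega : exists y, y <o Omega U.
Proof.
  apply NNPP. intro hn. apply (Omega_uncountable U). exists (fun _ => 0).
  intros y z hy. exfalso. apply hn. eauto.
Qed.

Lemma osucc_spec x : x <o osucc U x /\ forall y, x <o y -> osucc U x <=o y.
Proof.
  apply omin_spec. destruct exists_olt_Omega as [y hy].
  destruct (olt_regular U (Omega U) (fun _ => x)) as [m hm]. exists m. exact (hm y hy).
Qed.

Lemma olt_osucc x : x <o osucc U x.
Proof. apply osucc_spec. Qed.

Lemma osucc_le x y : x <o y -> osucc U x <=o y.
Proof. apply osucc_spec. Qed.

Lemma olt_osucc_ole x y : y <o osucc U x -> y <=o x.
Proof. intro h. apply not_olt_ole. intro h2. exact (ole_not_olt _ _ (osucc_le _ _ h2) h). Qed.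

Lemma osucc_inj x y : osucc U x = osucc U y -> x = y.
Proof.
  intro e. destruct (olt_total U x y) as [h|[h|h]]; [exfalso| exact h | exfalso];
    apply osucc_le in h; [rewrite e in h | rewrite <- e in h];
    exact (ole_not_olt _ _ h (olt_osucc _)).
Qed.

Lemma osucc_neq_ozero x : osucc U x <> ozero U.
Proof. intro e. apply (ole_not_olt _ _ (ozero_le x)). rewrite <- e. apply olt_osucc. Qed.

Lemma zero_succ_or_limit b : b = ozero U \/ (exists c, b = osucc U c) \/ is_limit U b.
Proof.
  destruct (classic (b = ozero U)) as [|h0]; auto.
  destruct (classic (exists c, b = osucc U c)) as [|hs]; auto.
  right; right. split; auto. intros c e. apply hs; eauto.
Qed.

Lemma limit_osucc_lt b c : is_limit U b -> c <o b -> osucc U c <o b.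
Proof.
  intros [_ hl] h. destruct (osucc_le _ _ h) as [h'|h']; [exact h'|].
  exfalso. exact (hl c (eq_sym h')).
Qed.

Lemma ozero_lt_limit b : is_limit U b -> ozero U <o b.
Proof.
  intros [hz _]. destruct (ozero_le b) as [h|h]; [exact h|]. exfalso; exact (hz (eq_sym h)).
Qed.

(* A countable c would make its successor countable as well (send c itself to 0). *)
Lemma Omega_limit : is_limit U (Omega U).
Proof.
  split.
  - intro e. destruct exists_olt_Omega as [y hy]. rewrite e in hy.
    exact (ole_not_olt _ _ (ozero_le y) hy).
  - intros c e. apply (Omega_uncountable U).
    assert (hc : c <o Omega U) by (rewrite e; apply olt_osucc).
    destruct (Omega_least U c hc) as [g hg].
    exists (fun y => if excluded_middle_informative (y = c) then 0 else S (g y)).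
    intros y z hy hz. rewrite e in hy, hz.
    apply olt_osucc_ole in hy. apply olt_osucc_ole in hz.
    destruct (excluded_middle_informative (y = c)), (excluded_middle_informative (z = c));
      intro E; try congruence.
    destruct hy as [hy|]; [|contradiction]. destruct hz as [hz|]; [|contradiction].
    injection E. exact (hg y z hy hz).
Qed.

Lemma oomega_limit : is_limit U (oomega U).
Proof. apply (omin_spec (is_limit U)). exists (Omega U). apply Omega_limit. Qed.

Lemma oone_lt_oomega : oone U <o oomega U.
Proof. apply limit_osucc_lt, ozero_lt_limit; apply oomega_limit. Qed.

Lemma wf_rec_exists (T : Type) (t0 : T) (G : (O -> T) -> O -> T) :
  (forall f g x, (forall y, y <o x -> f y = g y) -> G f x = G g x) ->
  exists f, forall x, f x = G f x.
Proof.
  intro HG.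
  set (restrict := fun x (h : forall y, y <o x -> T) (y : O) =>
    match excluded_middle_informative (y <o x) with left H => h y H | right _ => t0 end).
  set (F := fun x h => G (restrict x h) x).
  assert (HF : forall x (f g : forall y, y <o x -> T),
             (forall y (p : y <o x), f y p = g y p) -> F x f = F x g).
  { intros x f g Hfg. apply HG. intros y hy. unfold restrict.
    destruct (excluded_middle_informative (y <o x)); auto. }
  exists (Fix (olt_wf U) (fun _ => T) F). intro x.
  rewrite (Fix_eq (olt_wf U) (fun _ => T) F HF). apply HG. intros y hy. unfold restrict.
  destruct (excluded_middle_informative (y <o x)); [reflexivity | contradiction].
Qed.

Definition is_cont_rec (z : O) (s : O -> O) (f : O -> O) : Prop :=
  f (ozero U) = z /\ (forall c, f (osucc U c) = s (f c)) /\
  (forall b, is_limit U b -> f b = osup U (fam f b)).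

Lemma cont_rec_exists z s : exists f, is_cont_rec z s f.
Proof.
  set (pred := fun b => epsilon (inhO U) (fun c => b = osucc U c)).
  set (G := fun (f : O -> O) b =>
    if excluded_middle_informative (b = ozero U) then z
    else if excluded_middle_informative (exists c, b = osucc U c) then s (f (pred b))
    else osup U (fam f b)).
  destruct (wf_rec_exists O z G) as [f hf].
  - intros f g x Hfg. unfold G.
    destruct (excluded_middle_informative (x = ozero U)); [reflexivity|].
    destruct (excluded_middle_informative (exists c, x = osucc U c)) as [e|].
    + f_equal. apply Hfg.
      rewrite (epsilon_spec (inhO U) (fun c => x = osucc U c) e) at 2. apply olt_osucc.
    + f_equal. apply functional_extensionality; intro g0. apply propositional_extensionality.
      split; intros [c [hc ->]]; exists c; (split; [exact hc|]); [|symmetry]; apply Hfg; exact hc.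
  - exists f. split; [|split].
    + rewrite hf. unfold G.
      destruct (excluded_middle_informative (ozero U = ozero U)); congruence.
    + intro c. rewrite hf. unfold G.
      destruct (excluded_middle_informative (osucc U c = ozero U)) as [e|].
      { destruct (osucc_neq_ozero _ e). }
      destruct (excluded_middle_informative (exists c0, osucc U c = osucc U c0)) as [e|ne].
      * do 2 f_equal. symmetry. apply osucc_inj.
        exact (epsilon_spec (inhO U) (fun c0 => osucc U c = osucc U c0) e).
      * exfalso. apply ne. eauto.
    + intros b [hz hl]. rewrite hf. unfold G.
      destruct (excluded_middle_informative (b = ozero U)); [contradiction|].
      destruct (excluded_middle_informative (exists c, b = osucc U c)) as [[c e]|];
        [destruct (hl c e) | reflexivity].
Qed.

(* The only values at which s is applied are f c >= f 0 = z. *)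
Lemma cont_rec_strict z s f :
  is_cont_rec z s f -> (forall v, z <=o v -> v <o s v) -> forall b c, b <o c -> f b <o f c.
Proof.
  intros [f0 [fS fL]] hs b c. revert b.
  induction c as [c IH] using (well_founded_ind (olt_wf U)). intros b hb.
  assert (above_z : forall d, d <o c -> z <=o f d).
  { intros d hd. rewrite <- f0. destruct (ozero_le d) as [h| <-]; [left; exact (IH d hd _ h)|].
    apply ole_refl. }
  destruct (zero_succ_or_limit c) as [->|[[c' ->]|hl]].
  - destruct (ole_not_olt _ _ (ozero_le b) hb).
  - rewrite fS. apply (ole_olt_trans _ (f c')); [|apply hs, above_z, olt_osucc].
    destruct (olt_osucc_ole _ _ hb) as [h| ->]; [left; apply IH; auto; apply olt_osucc|].
    apply ole_refl.
  - rewrite (fL c hl). apply (olt_ole_trans _ (f (osucc U b))).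
    + rewrite fS. apply hs, above_z, hb.
    + apply (osup_spec f c). apply limit_osucc_lt; auto.
Qed.

Lemma strict_mono_inflationary (f : O -> O) :
  (forall b c, b <o c -> f b <o f c) -> forall b, b <=o f b.
Proof.
  intros hf b. induction b as [b IH] using (well_founded_ind (olt_wf U)).
  apply not_olt_ole. intro h. exact (ole_not_olt _ _ (IH _ h) (hf _ _ h)).
Qed.

Lemma oadd_spec a : is_cont_rec a (osucc U) (oadd U a).
Proof.
  revert a. apply (epsilon_spec (inhF U) (fun f => forall a, is_cont_rec a (osucc U) (f a))).
  exists (fun a => epsilon (inhF1 U) (is_cont_rec a (osucc U))). intro a.
  apply epsilon_spec, cont_rec_exists.
Qed.

Lemma omul_spec a : is_cont_rec (ozero U) (fun v => oadd U v a) (omul U a).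
Proof.
  revert a.
  apply (epsilon_spec (inhF U)
    (fun f => forall a, is_cont_rec (ozero U) (fun v => oadd U v a) (f a))).
  exists (fun a => epsilon (inhF1 U) (is_cont_rec (ozero U) (fun v => oadd U v a))). intro a.
  apply epsilon_spec, cont_rec_exists.
Qed.

Lemma oexp_spec : is_cont_rec (oone U) (fun v => omul U v (oomega U)) (oexp U).
Proof. exact (epsilon_spec (inhF1 U) _ (cont_rec_exists _ _)). Qed.

Lemma oadd_zero a : oadd U a (ozero U) = a.
Proof. apply oadd_spec. Qed.

Lemma oadd_strict a b c : b <o c -> oadd U a b <o oadd U a c.
Proof. apply (cont_rec_strict _ _ _ (oadd_spec a)). intros v _. apply olt_osucc. Qed.

Lemma oadd_ge_l a b : a <=o oadd U a b.
Proof.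
  rewrite <- (oadd_zero a) at 1.
  destruct (ozero_le b) as [h| <-]; [left; apply oadd_strict, h | apply ole_refl].
Qed.

Lemma oadd_ge_r a b : b <=o oadd U a b.
Proof. apply strict_mono_inflationary, oadd_strict. Qed.

Lemma omul_strict a b c : ozero U <o a -> b <o c -> omul U a b <o omul U a c.
Proof.
  intro ha. apply (cont_rec_strict _ _ _ (omul_spec a)). intros v _.
  rewrite <- (oadd_zero v) at 1. apply oadd_strict, ha.
Qed.

Lemma olt_omul_oomega x : ozero U <o x -> x <o omul U x (oomega U).
Proof.
  intro hx. destruct (omul_spec x) as [m0 [mS _]].
  apply (ole_olt_trans _ (omul U x (oone U))).
  - unfold oone. rewrite mS, m0. apply oadd_ge_r.
  - apply omul_strict, oone_lt_oomega. exact hx.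
Qed.

Lemma oexp_strict b c : b <o c -> oexp U b <o oexp U c.
Proof.
  apply (cont_rec_strict _ _ _ oexp_spec). intros v hv. apply olt_omul_oomega.
  apply (olt_ole_trans _ (oone U)); [apply olt_osucc | exact hv].
Qed.

Lemma phi_ozero : phi U (ozero U) = oexp U.
Proof.
  assert (hrec : exists F : O -> O -> O, F (ozero U) = oexp U /\
    forall x, ozero U <o x -> F x = oenum U (fun g => forall z, z <o x -> F z g = g)).
  { destruct (wf_rec_exists (O -> O) (oexp U) (fun F x =>
      if excluded_middle_informative (x = ozero U) then oexp U
      else oenum U (fun g => forall z, z <o x -> F z g = g))) as [F hF].
    - intros f g x Hfg. destruct (excluded_middle_informative (x = ozero U)); [reflexivity|].
      f_equal. apply functional_extensionality; intro g0. apply propositional_extensionality.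
      split; intros h z hz; [rewrite <- (Hfg z hz) | rewrite (Hfg z hz)]; auto.
    - exists F. split.
      + rewrite hF. destruct (excluded_middle_informative (ozero U = ozero U)); congruence.
      + intros x hx. rewrite hF.
        destruct (excluded_middle_informative (x = ozero U)) as [e|]; [|reflexivity].
        rewrite e in hx. destruct (olt_irrefl _ hx). }
  exact (proj1 (epsilon_spec (inhF U) _ hrec)).
Qed.

Lemma Bclos_ext (f g : O -> O) a r :
  (forall y, y <o a -> f y = g y) -> Bclos U f a r -> Bclos U g a r.
Proof.
  intros Hfg H. induction H as [| |x y _ ? _ ?|x y _ ? _ ?|x _ ? hx]; try (constructor; auto).
  rewrite (Hfg x hx). constructor; auto.
Qed.

Lemma B_mono a b r : a <=o b -> B U a r -> B U b r.
Proof.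
  intros hab H. induction H as [| |x y _ ? _ ?|x y _ ? _ ?|x _ ? hx]; constructor; auto.
  exact (olt_ole_trans _ _ _ hx hab).
Qed.

Lemma psi_eq a : psi U a = omin U (fun r => r <o Omega U /\ ~ B U a r).
Proof.
  revert a. apply (epsilon_spec (inhF1 U)
    (fun p => forall a, p a = omin U (fun r => r <o Omega U /\ ~ Bclos U p a r))).
  apply (wf_rec_exists O (ozero U)). intros f g x Hfg. f_equal.
  apply functional_extensionality; intro r. apply propositional_extensionality.
  split; intros [h1 h2]; split; auto; intro h3; apply h2;
    [apply (Bclos_ext g f) | apply (Bclos_ext f g)]; auto.
  intros y hy; symmetry; auto.
Qed.

Inductive term := Tzero | TOmega | Tadd (t u : term) | Tphi (t u : term) | Tpsi (t : term).

Fixpoint term_code (t : term) : nat :=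
  match t with
  | Tzero => Cantor.to_nat (0, 0)
  | TOmega => Cantor.to_nat (1, 0)
  | Tadd t u => Cantor.to_nat (2, Cantor.to_nat (term_code t, term_code u))
  | Tphi t u => Cantor.to_nat (3, Cantor.to_nat (term_code t, term_code u))
  | Tpsi t => Cantor.to_nat (4, term_code t)
  end.

Lemma cantor_to_nat_inj k m k' m' :
  Cantor.to_nat (k, m) = Cantor.to_nat (k', m') -> k = k' /\ m = m'.
Proof.
  intro e. assert (e' : (k, m) = (k', m')).
  { rewrite <- (Cantor.cancel_of_to (k, m)), <- (Cantor.cancel_of_to (k', m')), e. reflexivity. }
  injection e'. auto.
Qed.

Lemma term_code_inj t u : term_code t = term_code u -> t = u.
Proof.
  revert u. induction t; destruct u; intro e; try reflexivity; cbn [term_code] in e;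
    apply cantor_to_nat_inj in e; destruct e as [e1 e2]; try discriminate.
  - apply cantor_to_nat_inj in e2. destruct e2. f_equal; auto.
  - apply cantor_to_nat_inj in e2. destruct e2. f_equal; auto.
  - f_equal; auto.
Qed.

Inductive eval (a : O) : term -> O -> Prop :=
| eval_zero : eval a Tzero (ozero U)
| eval_Omega : eval a TOmega (Omega U)
| eval_add t u x y : eval a t x -> eval a u y -> eval a (Tadd t u) (oadd U x y)
| eval_phi t u x y : eval a t x -> eval a u y -> eval a (Tphi t u) (phi U x y)
| eval_psi t x : eval a t x -> x <o a -> eval a (Tpsi t) (psi U x).

Lemma eval_functional a t x y : eval a t x -> eval a t y -> x = y.
Proof.
  intro hx. revert y. induction hx; intros z hz; inversion hz; subst; f_equal; auto.
Qed.

Lemma B_eval a r : B U a r -> exists t, eval a t r.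
Proof.
  intro H. induction H as [| |x y _ [t ht] _ [u hu]|x y _ [t ht] _ [u hu]|x _ [t ht] hx].
  - exists Tzero; constructor.
  - exists TOmega; constructor.
  - exists (Tadd t u); constructor; auto.
  - exists (Tphi t u); constructor; auto.
  - exists (Tpsi t); constructor; auto.
Qed.

(* Otherwise "code of the chosen term evaluating to r" would inject Omega into nat. *)
Lemma B_misses_countable a : exists r, r <o Omega U /\ ~ B U a r.
Proof.
  apply NNPP. intro hn. apply (Omega_uncountable U).
  assert (hall : forall r, r <o Omega U -> exists t, eval a t r).
  { intros r hr. apply B_eval. apply NNPP. intro h. apply hn. eauto. }
  exists (fun r => term_code (epsilon (inhabits Tzero) (fun t => eval a t r))).
  intros y z hy hz e. apply term_code_inj in e.
  pose proof (epsilon_spec (inhabits Tzero) (fun t => eval a t y) (hall y hy)) as Ey.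
  pose proof (epsilon_spec (inhabits Tzero) (fun t => eval a t z) (hall z hz)) as Ez.
  cbv beta in Ey, Ez. rewrite e in Ey. exact (eval_functional _ _ _ _ Ey Ez).
Qed.

Lemma psi_spec a :
  (psi U a <o Omega U /\ ~ B U a (psi U a)) /\
  forall r, r <o Omega U -> ~ B U a r -> psi U a <=o r.
Proof.
  rewrite psi_eq. destruct (omin_spec _ (B_misses_countable a)) as [h1 h2]. split; auto.
Qed.

Lemma psi_lt_of_B a b : a <=o b -> B U b (psi U a) -> psi U a <o psi U b.
Proof.
  intros hab hin. destruct (psi_spec b) as [[hO hn] _]. destruct (psi_spec a) as [_ hmin].
  destruct (hmin (psi U b) hO) as [h|e].
  - intro h. exact (hn (B_mono _ _ _ hab h)).
  - exact h.
  - rewrite e in hin. contradiction.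
Qed.

Lemma H_psi eta X : H U eta X eta -> H U eta X (psi U eta).
Proof. intros h a hX ha. constructor; [exact (h a hX ha) | exact ha]. Qed.

Lemma H_mono eta eta' X x : eta <=o eta' -> H U eta X x -> H U eta' X x.
Proof. intros he h a hX ha. exact (h a hX (ole_olt_trans _ _ _ he ha)). Qed.

Lemma hat_strict eta b c : b <o c -> hat U eta b <o hat U eta c.
Proof. intro h. apply oadd_strict, oexp_strict, oadd_strict, h. Qed.

Lemma B_hat eta b a : B U a eta -> B U a b -> B U a (hat U eta b).
Proof.
  intros he hb. unfold hat. rewrite <- phi_ozero.
  repeat constructor; auto.
Qed.

Lemma H_hat eta X alpha :
  H U eta X eta -> H U eta X alpha -> H U (hat U eta alpha) X (hat U eta alpha).
Proof.
  intros he ha. apply (H_mono eta); [apply oadd_ge_l|].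
  intros a hX hlt. apply B_hat; auto.
Qed.

End OrdinalUniverse.

Theorem lemma2p20 (U : OrdUniverse) (eta : U)
  (Heta_B : B U (eps_Omega1 U) eta)
  (Heta : H U eta (fun _ => False) eta) :
  (forall alpha : U,
      B U (eps_Omega1 U) alpha ->
      H U eta (fun _ => False) alpha ->
      H U (hat U eta alpha) (fun _ => False) (hat U eta alpha) /\
      H U (hat U eta alpha) (fun _ => False) (psi U (hat U eta alpha))) /\
  (forall alpha0 alpha : U,
      B U (eps_Omega1 U) alpha0 ->
      B U (eps_Omega1 U) alpha ->
      H U eta (fun _ => False) alpha0 ->
      olt U alpha0 alpha ->
      olt U (psi U (hat U eta alpha0)) (psi U (hat U eta alpha))).
Proof.
  assert (part_i : forall alpha, H U eta (fun _ => False) alpha ->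
            H U (hat U eta alpha) (fun _ => False) (hat U eta alpha) /\
            H U (hat U eta alpha) (fun _ => False) (psi U (hat U eta alpha))).
  { intros alpha ha. pose proof (H_hat U eta _ alpha Heta ha) as hhat.
    split; [exact hhat | apply H_psi, hhat]. }
  split.
  - intros alpha _. apply part_i.
  - intros alpha0 alpha _ _ ha0 hlt.
    pose proof (hat_strict U eta _ _ hlt) as hh.
    apply psi_lt_of_B; [left; exact hh|].
    apply (proj2 (part_i alpha0 ha0)); [intros _ [] | exact hh].
Qed.
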